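(* Let $\tau$ be a distributive triangle function on $\Delta^+$, $\Sigma$ a ring of subsets of $\Omega\ne\emptyset$, $\gamma$ a $\tau$-decomposable measure on $\Sigma$, and $E\in\Sigma$. Let $f=\sum_{i=1}^n\alpha_i\chi_{E_i}$ with $\alpha_i\in[0,\infty)$ and $E_1,\dots,E_n\in\Sigma$ pairwise disjoint, and $g=\sum_{j=1}^m\beta_j\chi_{F_j}$ with $\beta_j\in[0,\infty)$ and $F_1,\dots,F_m\in\Sigma$ pairwise disjoint. If $f=g$ (as functions on $\Omega$), then $$\bigoplus_{i=1}^n\alpha_i\odot\gamma_{E\cap E_i}=\bigoplus_{j=1}^m\beta_j\odot\gamma_{E\cap F_j},$$ i.e. the $\gamma$-integral $\int_E f\,d\gamma$ of a simple function does not depend on its representation.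
   Context: $\Delta^+$: functions $F:[-\infty,+\infty]\to[0,1]$ non-decreasing, left-continuous on $\mathbb{R}$, $F(x)=0$ for $x\le0$, $F(+\infty)=1$; $\varepsilon_0(x)=1$ if $x>0$, else $0$. Triangle function: symmetric, associative $\tau:\Delta^+\times\Delta^+\to\Delta^+$, non-decreasing in each variable, identity $\varepsilon_0$; $G\oplus H=\tau(G,H)$, $\bigoplus_{k=1}^nG_k=\tau(G_1,\bigoplus_{k=2}^nG_k)$. For $c\ge0$, $c\odot G=\varepsilon_0$ if $c=0$, $(c\odot G)(x)=G(x/c)$ if $c>0$; $\tau$ is distributive if $c\odot(G\oplus H)=(c\odot G)\oplus(c\odot H)$ for all $c\ge0$, $G,H$. A $\tau$-decomposable measure on $\Sigma$ is $\gamma:\Sigma\to\Delta^+$ with $\gamma_\emptyset=\varepsilon_0$ and $\gamma_{A\cup B}=\tau(\gamma_A,\gamma_B)$ for disjoint $A,B\in\Sigma$. For a simple function $f=\sum_{i=1}^n x_i\chi_{E_i}$ ($x_i\ge0$, $E_i\in\Sigma$ pairwise disjoint) one defines $\int_Ef\,d\gamma=\bigoplus_{i=1}^nx_i\odot\gamma_{E\cap E_i}$. *)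

From Stdlib Require Import Reals Lra ClassicalDescription.
From Coquelicot Require Import Rbar.
Open Scope R_scope.

Record isDplus (F : Rbar -> R) : Prop := {
  dp_range : forall x, 0 <= F x <= 1;
  dp_mono  : forall x y, Rbar_le x y -> F x <= F y;
  dp_leftc : forall x : R, forall eps, 0 < eps ->
               exists d, 0 < d /\ forall y : R, x - d < y < x ->
                 Rabs (F (Finite y) - F (Finite x)) < eps;
  dp_zero  : forall x, Rbar_le x (Finite 0) -> F x = 0;
  dp_top   : F p_infty = 1 }.

Definition Dplus := { F : Rbar -> R | isDplus F }.

Definition dval (G : Dplus) : Rbar -> R := proj1_sig G.

Definition dle (G H : Dplus) : Prop := forall x, dval G x <= dval H x.

Definition eps0_fun (x : Rbar) : R :=
  match x with
  | Finite r => if Rlt_dec 0 r then 1 else 0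
  | p_infty => 1
  | m_infty => 0
  end.

Lemma eps0_isDplus : isDplus eps0_fun.
Proof.
split.
- intros [r| |]; simpl; try lra. destruct (Rlt_dec 0 r); lra.
- intros [r| |] [s| |]; simpl; try tauto; try lra.
  + intros H. destruct (Rlt_dec 0 r), (Rlt_dec 0 s); lra.
  + destruct (Rlt_dec 0 r); lra.
  + destruct (Rlt_dec 0 s); lra.
- intros x eps Heps. simpl. destruct (Rlt_dec 0 x) as [Hx|Hx].
  + exists x. split; [lra|]. intros y Hy.
    destruct (Rlt_dec 0 y); [|lra]. rewrite Rminus_diag, Rabs_R0. lra.
  + exists 1. split; [lra|]. intros y Hy.
    destruct (Rlt_dec 0 y); [lra|]. rewrite Rminus_diag, Rabs_R0. lra.
- intros [r| |]; simpl; try tauto. intros H.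
  destruct (Rlt_dec 0 r); lra.
- reflexivity.
Qed.

Definition eps0 : Dplus := exist _ eps0_fun eps0_isDplus.

(** c (.) G : epsilon_0 if c = 0, x |-> G(x/c) if c > 0.
    (Only c >= 0 is ever used; for c <= 0 we return epsilon_0.) *)
Definition smul_fun (c : R) (G : Rbar -> R) (x : Rbar) : R :=
  match x with
  | Finite r => G (Finite (r / c))
  | p_infty => G p_infty
  | m_infty => G m_infty
  end.

Lemma smul_isDplus (c : R) (G : Rbar -> R) :
  0 < c -> isDplus G -> isDplus (smul_fun c G).
Proof.
intros Hc [Hr Hm Hl Hz Ht].
assert (Hic : 0 < / c) by (apply Rinv_0_lt_compat; exact Hc).
split.
- intros [r| |]; simpl; apply Hr.
- intros [r| |] [s| |]; simpl; intros H; try (apply Hm; simpl; tauto).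
  apply Hm; simpl. unfold Rdiv. apply Rmult_le_compat_r; lra.
- intros x eps Heps. simpl. destruct (Hl (x / c) eps Heps) as [d [Hd Hy]].
  exists (c * d). split; [apply Rmult_lt_0_compat; lra|].
  intros y Hy'. apply Hy. unfold Rdiv. split.
  + assert (E : x * / c - d = (x - c * d) * / c) by (field; lra).
    rewrite E. apply Rmult_lt_compat_r; lra.
  + apply Rmult_lt_compat_r; lra.
- intros [r| |]; simpl; intros H; try (apply Hz; simpl; try tauto).
  unfold Rdiv. assert (r * / c <= 0 * / c) by (apply Rmult_le_compat_r; lra).
  lra.
- exact Ht.
Qed.

Definition smul (c : R) (G : Dplus) : Dplus :=
  match Rlt_dec 0 c with
  | left Hc => exist _ (smul_fun c (dval G)) (smul_isDplus c (dval G) Hc (proj2_sig G))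
  | right _ => eps0
  end.

Record triangle_function (tau : Dplus -> Dplus -> Dplus) : Prop := {
  tf_sym   : forall G H, tau G H = tau H G;
  tf_assoc : forall G H K, tau G (tau H K) = tau (tau G H) K;
  tf_mono_l : forall G G' H, dle G G' -> dle (tau G H) (tau G' H);
  tf_mono_r : forall G H H', dle H H' -> dle (tau G H) (tau G H');
  tf_id    : forall G, tau G eps0 = G }.

Definition distributive (tau : Dplus -> Dplus -> Dplus) : Prop :=
  forall c G H, 0 <= c -> smul c (tau G H) = tau (smul c G) (smul c H).

(** Iterated sum: bigoplus tau n G = tau (G 0) (bigoplus tau (n-1) (G (. + 1)));
    indices 0..n-1 correspond to 1..n in the paper; the empty sum is epsilon_0. *)
Fixpoint bigoplus (tau : Dplus -> Dplus -> Dplus) (n : nat) (G : nat -> Dplus) : Dplus :=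
  match n with
  | O => eps0
  | S k => tau (G O) (bigoplus tau k (fun i => G (S i)))
  end.

Definition set_empty {T : Type} : T -> Prop := fun _ => False.
Definition set_union {T : Type} (A B : T -> Prop) : T -> Prop := fun x => A x \/ B x.
Definition set_inter {T : Type} (A B : T -> Prop) : T -> Prop := fun x => A x /\ B x.
Definition set_diff {T : Type} (A B : T -> Prop) : T -> Prop := fun x => A x /\ ~ B x.
Definition set_disjoint {T : Type} (A B : T -> Prop) : Prop := forall x, ~ (A x /\ B x).

Record ring_of_sets {T : Type} (Sigma : (T -> Prop) -> Prop) : Prop := {
  ros_empty : Sigma set_empty;
  ros_union : forall A B, Sigma A -> Sigma B -> Sigma (set_union A B);
  ros_diff  : forall A B, Sigma A -> Sigma B -> Sigma (set_diff A B) }.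

Definition decomposable_measure {T : Type} (tau : Dplus -> Dplus -> Dplus)
  (Sigma : (T -> Prop) -> Prop) (gamma : (T -> Prop) -> Dplus) : Prop :=
  gamma set_empty = eps0 /\
  forall A B, Sigma A -> Sigma B -> set_disjoint A B ->
    gamma (set_union A B) = tau (gamma A) (gamma B).

Definition chi {T : Type} (A : T -> Prop) (x : T) : R :=
  if excluded_middle_informative (A x) then 1 else 0.

Fixpoint rsum (n : nat) (u : nat -> R) : R :=
  match n with
  | O => 0
  | S k => rsum k u + u k
  end.

Definition simple_fun {T : Type} (n : nat) (a : nat -> R) (E : nat -> T -> Prop)
  (x : T) : R := rsum n (fun i => a i * chi (E i) x).

Definition simple_integral {T : Type} (tau : Dplus -> Dplus -> Dplus)
  (gamma : (T -> Prop) -> Dplus) (E : T -> Prop) (n : nat) (a : nat -> R)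
  (Es : nat -> T -> Prop) : Dplus :=
  bigoplus tau n (fun i => smul (a i) (gamma (set_inter E (Es i)))).

(* Both integrals equal the integral over the common refinement
   {E ∩ E_i ∩ F_j}.  Decomposability splits gamma(E ∩ E_i) into the pieces
   gamma(E ∩ E_i ∩ F_j) plus the part of E ∩ E_i outside all F_j;
   distributivity pushes alpha_i ⊙ _ through the sum.  On the outside part
   f = alpha_i and g = 0, so that term vanishes, and on a non-empty piece
   E ∩ E_i ∩ F_j we have alpha_i = f = g = beta_j.  Exchanging the double
   sum makes the two sides agree term by term. *)

From Stdlib Require Import Reals Lra Lia.
From Stdlib Require Import FunctionalExtensionality PropExtensionality ProofIrrelevance Classical ClassicalDescription.
From Coquelicot Require Import Rbar.
Open Scope R_scope.

Lemma set_ext {T : Type} (A B : T -> Prop) : (forall x, A x <-> B x) -> A = B.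
Proof.
intros H. apply functional_extensionality; intros x.
apply propositional_extensionality, H.
Qed.

Lemma Dplus_ext (G H : Dplus) : (forall x, dval G x = dval H x) -> G = H.
Proof.
destruct G as [g g_in], H as [h h_in]; simpl; intros Egh.
assert (g = h) as <- by (apply functional_extensionality; exact Egh).
f_equal. apply proof_irrelevance.
Qed.

Lemma smul_eps0 (c : R) : smul c eps0 = eps0.
Proof.
unfold smul. destruct (Rlt_dec 0 c) as [c_gt0|]; [|reflexivity].
apply Dplus_ext; intros [r| |]; simpl; try reflexivity.
destruct (Rlt_dec 0 (r / c)) as [Hrc|Hrc], (Rlt_dec 0 r) as [Hr|Hr]; try reflexivity.
- exfalso. apply Hr. replace r with (r / c * c) by (field; lra).
  apply Rmult_lt_0_compat; lra.
- exfalso. apply Hrc. apply Rdiv_lt_0_compat; lra.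
Qed.

Lemma smul0 (G : Dplus) : smul 0 G = eps0.
Proof. unfold smul. destruct (Rlt_dec 0 0); [exfalso; lra|reflexivity]. Qed.

Section TriangleFunction.

Variable tau : Dplus -> Dplus -> Dplus.
Hypothesis tau_tf : triangle_function tau.

Lemma eq_bigoplus (n : nat) (G H : nat -> Dplus) :
  (forall i, (i < n)%nat -> G i = H i) -> bigoplus tau n G = bigoplus tau n H.
Proof.
revert G H; induction n as [|n IHn]; intros G H EGH; simpl; [reflexivity|].
rewrite (EGH 0%nat) by lia. f_equal.
apply IHn. intros i Hi. apply EGH. lia.
Qed.

Lemma tau_eps0l (G : Dplus) : tau eps0 G = G.
Proof. rewrite (tf_sym _ tau_tf). apply (tf_id _ tau_tf). Qed.

Lemma bigoplus_eps0 (n : nat) : bigoplus tau n (fun _ => eps0) = eps0.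
Proof. induction n as [|n IHn]; simpl; [|rewrite IHn; apply (tf_id _ tau_tf)]; reflexivity. Qed.

Lemma tauACA (a b c d : Dplus) : tau (tau a b) (tau c d) = tau (tau a c) (tau b d).
Proof.
destruct tau_tf as [sym assoc _ _ _].
rewrite <- assoc, (assoc b c d), (sym b c), <- (assoc c b d), assoc.
reflexivity.
Qed.

Lemma bigoplus_split (n : nat) (G H : nat -> Dplus) :
  bigoplus tau n (fun i => tau (G i) (H i)) = tau (bigoplus tau n G) (bigoplus tau n H).
Proof.
revert G H; induction n as [|n IHn]; intros G H; simpl.
- symmetry. apply (tf_id _ tau_tf).
- rewrite IHn. apply tauACA.
Qed.

Lemma exchange_bigoplus (n m : nat) (G : nat -> nat -> Dplus) :
  bigoplus tau n (fun i => bigoplus tau m (fun j => G i j)) =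
  bigoplus tau m (fun j => bigoplus tau n (fun i => G i j)).
Proof.
revert G; induction n as [|n IHn]; intros G; simpl.
- symmetry. apply bigoplus_eps0.
- rewrite (IHn (fun i j => G (S i) j)), <- bigoplus_split. reflexivity.
Qed.

Hypothesis tau_distr : distributive tau.

Lemma smul_bigoplus (c : R) (n : nat) (G : nat -> Dplus) :
  0 <= c -> smul c (bigoplus tau n G) = bigoplus tau n (fun i => smul c (G i)).
Proof.
revert G; induction n as [|n IHn]; intros G c_ge0; simpl.
- apply smul_eps0.
- rewrite tau_distr, IHn by exact c_ge0. reflexivity.
Qed.

End TriangleFunction.

Definition pairwise_disjoint {T : Type} (n : nat) (Es : nat -> T -> Prop) : Prop :=
  forall i j, (i < n)%nat -> (j < n)%nat -> i <> j -> set_disjoint (Es i) (Es j).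

Definition set_bigunion {T : Type} (n : nat) (Es : nat -> T -> Prop) : T -> Prop :=
  fun x => exists i, (i < n)%nat /\ Es i x.

Lemma ring_of_sets_inter {T : Type} (Sigma : (T -> Prop) -> Prop) (A B : T -> Prop) :
  ring_of_sets Sigma -> Sigma A -> Sigma B -> Sigma (set_inter A B).
Proof.
intros Sigma_ring SA SB.
replace (set_inter A B) with (set_diff A (set_diff A B)).
- apply (ros_diff _ Sigma_ring); [|apply (ros_diff _ Sigma_ring)]; assumption.
- apply set_ext; intros x; unfold set_diff, set_inter. split.
  + intros [Ax nAB]. split; [exact Ax|]. apply NNPP; tauto.
  + tauto.
Qed.

Lemma rsum_eq0 (n : nat) (u : nat -> R) :
  (forall k, (k < n)%nat -> u k = 0) -> rsum n u = 0.
Proof.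
induction n as [|n IHn]; intros u0; simpl; [reflexivity|].
rewrite IHn, u0 by (lia || (intros; apply u0; lia)). lra.
Qed.

Lemma rsum_eq1 (n : nat) (u : nat -> R) (i : nat) : (i < n)%nat ->
  (forall k, (k < n)%nat -> k <> i -> u k = 0) -> rsum n u = u i.
Proof.
induction n as [|n IHn]; intros Hi u0; [lia|]. simpl.
destruct (Nat.eq_dec i n) as [->|Hin].
- rewrite rsum_eq0 by (intros k Hk; apply u0; lia). lra.
- rewrite IHn, (u0 n) by (lia || (intros; apply u0; lia)). lra.
Qed.

Lemma chi1 {T : Type} (A : T -> Prop) (x : T) : A x -> chi A x = 1.
Proof. unfold chi. destruct excluded_middle_informative; tauto. Qed.

Lemma chi0 {T : Type} (A : T -> Prop) (x : T) : ~ A x -> chi A x = 0.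
Proof. unfold chi. destruct excluded_middle_informative; tauto. Qed.

Lemma simple_fun_on {T : Type} (n : nat) (a : nat -> R) (Es : nat -> T -> Prop)
  (i : nat) (x : T) :
  pairwise_disjoint n Es -> (i < n)%nat -> Es i x -> simple_fun n a Es x = a i.
Proof.
intros Es_disj Hi Eix. unfold simple_fun.
rewrite (rsum_eq1 _ _ i Hi), chi1 by
  (exact Eix || (intros k Hk Hki; rewrite chi0; [lra|];
                 intros Ekx; exact (Es_disj k i Hk Hi Hki x (conj Ekx Eix)))).
lra.
Qed.

Lemma simple_fun_off {T : Type} (n : nat) (a : nat -> R) (Es : nat -> T -> Prop) (x : T) :
  ~ set_bigunion n Es x -> simple_fun n a Es x = 0.
Proof.
intros nEx. unfold simple_fun. apply rsum_eq0. intros k Hk.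
rewrite chi0; [lra|]. intros Ekx. apply nEx. exists k. tauto.
Qed.

Section DecomposableMeasure.

Variables (T : Type) (tau : Dplus -> Dplus -> Dplus).
Variables (Sigma : (T -> Prop) -> Prop) (gamma : (T -> Prop) -> Dplus).
Hypothesis tau_tf : triangle_function tau.
Hypothesis Sigma_ring : ring_of_sets Sigma.
Hypothesis gamma_dec : decomposable_measure tau Sigma gamma.

Lemma measure_split_bigunion (m : nat) (Fs : nat -> T -> Prop) (A : T -> Prop) :
  Sigma A -> (forall j, (j < m)%nat -> Sigma (Fs j)) -> pairwise_disjoint m Fs ->
  gamma A = tau (bigoplus tau m (fun j => gamma (set_inter A (Fs j))))
                (gamma (set_diff A (set_bigunion m Fs))).
Proof.
destruct gamma_dec as [_ gamma_union].
revert Fs A; induction m as [|m IHm]; intros Fs A SA SFs Fs_disj; simpl.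
- rewrite tau_eps0l by exact tau_tf. f_equal.
  apply set_ext; intros x; unfold set_diff, set_bigunion.
  split; [intros Ax; split; [exact Ax|intros [j [Hj _]]; lia]|tauto].
- assert (SF0 : Sigma (Fs 0%nat)) by (apply SFs; lia).
  assert (SAF0 : Sigma (set_inter A (Fs 0%nat))) by (apply ring_of_sets_inter; assumption).
  assert (SAnF0 : Sigma (set_diff A (Fs 0%nat))) by (apply (ros_diff _ Sigma_ring); assumption).
  assert (split_F0 : A = set_union (set_inter A (Fs 0%nat)) (set_diff A (Fs 0%nat))).
  { apply set_ext; intros x; unfold set_union, set_inter, set_diff.
    destruct (classic (Fs 0%nat x)); tauto. }
  rewrite split_F0 at 1.
  rewrite gamma_union by (assumption || (intros x; unfold set_inter, set_diff; tauto)).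
  rewrite (IHm (fun j => Fs (S j)) (set_diff A (Fs 0%nat))) by
    (assumption || (intros; apply SFs; lia) || (intros i j Hi Hj Hij; apply Fs_disj; lia)).
  rewrite (tf_assoc _ tau_tf). f_equal; [f_equal|].
  + apply eq_bigoplus; intros j Hj. f_equal.
    apply set_ext; intros x; unfold set_inter, set_diff.
    split; [tauto|]. intros [Ax FSjx]. split; [|exact FSjx]. split; [exact Ax|].
    intros F0x. exact (Fs_disj (S j) 0%nat ltac:(lia) ltac:(lia) ltac:(lia) x (conj FSjx F0x)).
  + f_equal. apply set_ext; intros x; unfold set_diff, set_bigunion. split.
    * intros [[Ax nF0x] nFSx]. split; [exact Ax|]. intros [[|j] [Hj Fjx]]; [tauto|].
      apply nFSx. exists j. split; [lia|exact Fjx].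
    * intros [Ax nFx]. split; [split; [exact Ax|]|]; intros Fx; apply nFx.
      -- exists 0%nat. split; [lia|exact Fx].
      -- destruct Fx as [j [Hj Fjx]]. exists (S j). split; [lia|exact Fjx].
Qed.

Lemma smul_measure_congr (c d : R) (A : T -> Prop) :
  (forall x, A x -> c = d) -> smul c (gamma A) = smul d (gamma A).
Proof.
intros cd. destruct (classic (exists x, A x)) as [[x Ax]|noA].
- rewrite (cd x Ax). reflexivity.
- replace A with (@set_empty T)
    by (apply set_ext; intros x; unfold set_empty; split; [tauto|intros Ax; apply noA; eauto]).
  destruct gamma_dec as [gamma0 _]. rewrite gamma0, !smul_eps0. reflexivity.
Qed.

Hypothesis tau_distr : distributive tau.

Lemma simple_integral_refine (E : T -> Prop) (n : nat) (alpha : nat -> R)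
  (Es : nat -> T -> Prop) (m : nat) (beta : nat -> R) (Fs : nat -> T -> Prop) :
  Sigma E ->
  (forall i, (i < n)%nat -> 0 <= alpha i) ->
  (forall i, (i < n)%nat -> Sigma (Es i)) -> pairwise_disjoint n Es ->
  (forall j, (j < m)%nat -> Sigma (Fs j)) -> pairwise_disjoint m Fs ->
  (forall x, simple_fun n alpha Es x = simple_fun m beta Fs x) ->
  simple_integral tau gamma E n alpha Es =
  bigoplus tau n (fun i => bigoplus tau m (fun j =>
    smul (alpha i) (gamma (set_inter (set_inter E (Es i)) (Fs j))))).
Proof.
intros SE alpha_ge0 SEs Es_disj SFs Fs_disj f_eq_g.
apply eq_bigoplus; intros i Hi.
rewrite (measure_split_bigunion m Fs) by (auto || (apply ring_of_sets_inter; auto)).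
rewrite tau_distr, smul_bigoplus by auto.
rewrite (smul_measure_congr (alpha i) 0), smul0 by
  (intros x [[_ Eix] nFx];
   rewrite <- (simple_fun_on n alpha Es i x), f_eq_g by assumption;
   apply simple_fun_off; exact nFx).
apply (tf_id _ tau_tf).
Qed.

End DecomposableMeasure.

Theorem lemma4p2 (tau : Dplus -> Dplus -> Dplus) (Omega : Type)
  (Sigma : (Omega -> Prop) -> Prop) (gamma : (Omega -> Prop) -> Dplus)
  (E : Omega -> Prop)
  (n : nat) (alpha : nat -> R) (Es : nat -> Omega -> Prop)
  (m : nat) (beta : nat -> R) (Fs : nat -> Omega -> Prop) :
  triangle_function tau -> distributive tau ->
  inhabited Omega -> ring_of_sets Sigma ->
  decomposable_measure tau Sigma gamma -> Sigma E ->
  (forall i, (i < n)%nat -> 0 <= alpha i) ->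
  (forall i, (i < n)%nat -> Sigma (Es i)) ->
  (forall i j, (i < n)%nat -> (j < n)%nat -> i <> j -> set_disjoint (Es i) (Es j)) ->
  (forall j, (j < m)%nat -> 0 <= beta j) ->
  (forall j, (j < m)%nat -> Sigma (Fs j)) ->
  (forall i j, (i < m)%nat -> (j < m)%nat -> i <> j -> set_disjoint (Fs i) (Fs j)) ->
  (forall x, simple_fun n alpha Es x = simple_fun m beta Fs x) ->
  bigoplus tau n (fun i => smul (alpha i) (gamma (set_inter E (Es i)))) =
  bigoplus tau m (fun j => smul (beta j) (gamma (set_inter E (Fs j)))).
Proof.
intros tau_tf tau_distr _ Sigma_ring gamma_dec SE alpha_ge0 SEs Es_disj
       beta_ge0 SFs Fs_disj f_eq_g.
change (simple_integral tau gamma E n alpha Es = simple_integral tau gamma E m beta Fs).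
rewrite (simple_integral_refine Omega tau Sigma gamma tau_tf Sigma_ring gamma_dec
           tau_distr E n alpha Es m beta Fs),
        (simple_integral_refine Omega tau Sigma gamma tau_tf Sigma_ring gamma_dec
           tau_distr E m beta Fs n alpha Es),
        exchange_bigoplus by (auto; intros x; symmetry; apply f_eq_g).
apply eq_bigoplus; intros j Hj. apply eq_bigoplus; intros i Hi.
replace (set_inter (set_inter E (Es i)) (Fs j))
  with (set_inter (set_inter E (Fs j)) (Es i))
  by (apply set_ext; intros x; unfold set_inter; tauto).
apply (smul_measure_congr Omega tau Sigma gamma gamma_dec). intros x [[_ Fjx] Eix].
rewrite <- (simple_fun_on n alpha Es i x), f_eq_g by assumption.
apply simple_fun_on; assumption.
Qed.
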